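(* Let $\rho^A$ be a quantum state on a finite-dimensional system $A$ of dimension $d_A$, and let $\varepsilon\in[0,1]$. Then \[ \kappa_{3\sqrt{\varepsilon}}(\rho^A)\ \ge\ \log d_A-\widetilde{H}_{\max}^{\varepsilon}(A)_{\rho^A}. \]
   Context: All logarithms are base 2; whenever a quantity expresses a number of bits/qubits, a dimension, or a support size, the appropriate floor or ceiling is implicitly taken. Smoothed support max-entropy: given $\rho^A$ and $\varepsilon\ge 0$, let $\rho'^A\le\rho^A$ be the operator obtained from the spectral decomposition of $\rho^A$ by zeroing out the smallest eigenvalues whose sum is at most $\varepsilon$; then $\widetilde{H}_{\max}^{\varepsilon}(A)_{\rho}:=\log|\operatorname{supp}(\rho')|$ (log of the rank of $\rho'$). A purity concentration $\varepsilon$-code for $\rho^A$ consists of an ancilla system $C$ of dimension $d_C$ and a unitary $U^{AC\to A_pA_g}$ (with $A\otimes C\cong A_p\otimes A_g$) such that $\big\|\operatorname{Tr}_{A_g}[U(\rho^A\otimes|0\rangle\langle 0|^C)U^\dagger]-|0\rangle\langle0|^{A_p}\big\|_1\le\varepsilon$; its rate is $\log d_{A_p}-\log d_C$. A rate is $\varepsilon$-achievable if some purity concentration $\varepsilon$-code has that rate, and $\kappa_\varepsilon(\rho^A)$ (the $\varepsilon$-purity) is the supremum of $\varepsilon$-achievable rates. *)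

From HB Require Import structures.
From mathcomp Require Import all_boot all_order all_algebra.
From mathcomp Require Import sesquilinear spectral.
From mathcomp Require Import complex mxtens.
From mathcomp Require Import classical_sets reals exp.

Set Implicit Arguments.
Unset Strict Implicit.
Unset Printing Implicit Defensive.

Import Order.TTheory GRing.Theory Num.Theory.
Local Open Scope ring_scope.
Local Open Scope sesquilinear_scope.

Section Quantum.
Variable R : realType.
Local Notation C := (R[i]).

Definition log2 (x : R) : R := ln x / ln 2.

Definition is_state n (rho : 'M[C]_n) : Prop :=
  [/\ rho ^t* = rho,
      (forall v : 'rV[C]_n, 0 <= (v *m rho *m v ^t*) 0 0)
    & \tr rho = 1].

(* trace norm ||X||_1 = Tr sqrt(X^dagger X) = sum of the square roots of the
   eigenvalues of X^dagger X (computed via its spectral decomposition) *)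
Definition trnorm n (X : 'M[C]_n) : R :=
  \sum_(i < n) Num.sqrt (complex.Re (spectral_diag (X ^t* *m X) 0 i)).

(* partial trace over the second factor of  'I_p x 'I_g  (Kronecker indexing
   of mxtens) *)
Definition ptrace2 p g (M : 'M[C]_(p * g)) : 'M[C]_p :=
  \matrix_(i, j) \sum_(k < g) M (mxtens_index (i, k)) (mxtens_index (j, k)).

Definition eigs n (rho : 'M[C]_n) (i : 'I_n) : R := complex.Re (spectral_diag rho 0 i).

Definition eig_order n (rho : 'M[C]_n) : seq 'I_n :=
  sort (fun i j => eigs rho i <= eigs rho j) (enum 'I_n).

Definition n_zeroed n (rho : 'M[C]_n) (eps : R) : nat :=
  \max_(k < n.+1 | \sum_(i <- take k (eig_order rho)) eigs rho i <= eps) k.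

Definition smoothed_op n (rho : 'M[C]_n) (eps : R) : 'M[C]_n :=
  let Z := take (n_zeroed rho eps) (eig_order rho) in
  invmx (spectralmx rho)
    *m diag_mx (\row_i (if i \in Z then 0 else spectral_diag rho 0 i))
    *m spectralmx rho.

(* smoothed support max-entropy  log |supp rho'| = log rank rho' *)
Definition Hmax_tilde n (rho : 'M[C]_n) (eps : R) : R :=
  log2 (\rank (smoothed_op rho eps))%:R.

(* r is eps-achievable for rho: there is a purity concentration eps-code
   (ancilla C of dimension c.+1, unitary U : A (x) C -> A_p (x) A_g with
   dim A_p = p.+1, dim A_g = g) of rate log d_Ap - log d_C equal to r *)
Definition achievable dA (rho : 'M[C]_dA) (eps r : R) : Prop :=
  exists (c p g : nat) (U : 'M[C]_(p.+1 * g, dA * c.+1)),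
    [/\ (p.+1 * g = dA * c.+1)%N,
        U \is unitarymx,
        trnorm (ptrace2 (U *m (rho *t delta_mx (ord0 : 'I_c.+1) ord0) *m U ^t*)
                - delta_mx ord0 ord0) <= eps
      & r = log2 p.+1%:R - log2 c.+1%:R].

Definition purity dA (rho : 'M[C]_dA) (eps : R) : R :=
  sup [set r | achievable rho eps r].

End Quantum.

From HB Require Import structures.
From mathcomp Require Import all_boot all_order all_algebra.
From mathcomp Require Import sesquilinear spectral.
From mathcomp Require Import complex mxtens.
From mathcomp Require Import classical_sets reals exp.
From mathcomp Require Import fingroup perm.
From mathcomp Require Import lra.

Set Implicit Arguments.
Unset Strict Implicit.
Unset Printing Implicit Defensive.

Import Order.TTheory GRing.Theory Num.Theory.
Local Open Scope ring_scope.

(* Diagonalise rho = P^* diag(lam) P and let K be the support of the smoothed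
   spectrum: #|K| <= rank rho' and the eigenvalues outside K sum to at most
   eps.  Use an ancilla of dimension #|K|.  After P (x) 1 the state is
   diag(lam) (x) |0><0|, and a permutation of the product basis moves every
   |i,0>, i in K, into the block {|0,k>}.  The A_p-marginal is then diagonal
   with weight at least 1 - eps on |0>, hence at trace distance at most
   2 eps <= 3 sqrt eps from |0><0|, and the rate is log d_A - log #|K|. *)

Lemma perm_map_subset (T : finType) (A B : {set T}) : (#|A| <= #|B|)%N ->
  exists s : {perm T}, forall x, x \in A -> s x \in B.
Proof.
move=> leAB.
pose sA := enum A ++ enum (~: A); pose sB := enum B ++ enum (~: B).
have memA x : x \in sA by rewrite mem_cat !mem_enum finset.in_setC orbN.
have uniq_compl (D : {set T}) : uniq (enum D ++ enum (~: D)).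
  rewrite cat_uniq !enum_uniq andbT.
  by apply/hasPn => x; rewrite !mem_enum finset.in_setC.
have size_sA : size sA = size sB by rewrite !size_cat -!cardE !cardsC.
pose f x := nth x sB (index x sA).
have f_inj : injective f.
  move=> x y; rewrite /f.
  have iy : (index y sA < size sB)%N by rewrite -size_sA index_mem.
  rewrite (set_nth_default x y iy) => /eqP; rewrite nth_uniq ?uniq_compl //.
    by move=> /eqP e; rewrite -(nth_index x (memA x)) e nth_index.
  by rewrite -size_sA index_mem.
exists (perm f_inj) => x xA; rewrite permE /f.
have -> : index x sA = index x (enum A) by rewrite index_cat mem_enum xA.
have ltB : (index x (enum A) < #|B|)%N.
  by apply: leq_trans leAB; rewrite cardE index_mem mem_enum.
by rewrite nth_cat -cardE ltB -mem_enum mem_nth // -cardE.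
Qed.

Lemma sum_mxtens_index (V : nmodType) m n (F : 'I_(m * n) -> V) :
  \sum_x F x = \sum_i \sum_k F (mxtens_index (i, k)).
Proof.
rewrite pair_big (reindex (@mxtens_index m n)) /=; first by apply: eq_bigr => -[].
by exists (@mxtens_unindex m n) => x _; rewrite ?mxtens_indexK ?mxtens_unindexK.
Qed.

Lemma mxtens_index_eq m n (i j : 'I_m) (k l : 'I_n) :
  (mxtens_index (i, k) == mxtens_index (j, l)) = (i == j) && (k == l).
Proof.
apply/eqP/andP => [/(congr1 (@mxtens_unindex m n)) | [/eqP-> /eqP->] //].
by rewrite !mxtens_indexK => -[-> ->].
Qed.

Lemma char_poly_invmx_conj (F : fieldType) n (P A : 'M[F]_n) : P \in unitmx ->
  char_poly (invmx P *m A *m P) = char_poly A.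
Proof.
move=> Pu; rewrite /char_poly.
have -> : char_poly_mx (invmx P *m A *m P) =
    map_mx polyC (invmx P) *m char_poly_mx A *m map_mx polyC P.
  rewrite /char_poly_mx !map_mxM mulmxBr mulmxBl; congr (_ - _).
  by rewrite scalar_mxC -mulmxA -map_mxM mulVmx // map_mx1 mulmx1.
by rewrite !det_mulmx mulrAC -det_mulmx -map_mxM mulVmx // map_mx1 det1 mul1r.
Qed.

Lemma tensmx11 (R : comPzRingType) m n :
  (1%:M : 'M[R]_m) *t (1%:M : 'M[R]_n) = 1%:M.
Proof.
apply/matrixP => x y.
case: x / (@mxtens_indexP m n x) => i k; case: y / (@mxtens_indexP m n y) => j l.
by rewrite tensmxE !mxE mxtens_index_eq; case: (i == j); case: (k == l);
  rewrite /= ?(mul1r, mul0r).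
Qed.

Lemma tensmx_diag_delta0 (R : comPzRingType) m n (d : 'rV[R]_m) :
  diag_mx d *t (delta_mx 0 0 : 'M[R]_n.+1) =
  diag_mx (\row_x let: (i, k) := mxtens_unindex x in
                  if k == 0 then d 0 i else 0).
Proof.
apply/matrixP => x y.
case: x / (@mxtens_indexP m n.+1 x) => i k; case: y / (@mxtens_indexP m n.+1 y) => j l.
rewrite tensmxE !mxE mxtens_index_eq mxtens_indexK.
case: (i == j); rewrite ?mulr0n ?mul0r //.
case: (k =P 0) => [->|/eqP/negbTE k0]; case: (l =P 0) => [->|/eqP/negbTE l0];
  by rewrite ?k0 ?l0 ?eqxx /= ?mulr1 ?mulr0 ?mul0rn // eq_sym l0.
Qed.

Lemma mxrank_invmx_conj (F : fieldType) n (P A : 'M[F]_n) : P \in unitmx ->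
  \rank (invmx P *m A *m P) = \rank A.
Proof.
move=> Pu; rewrite mxrankMfree ?row_free_unit //.
by rewrite eqmxMfull // row_full_unit unitmx_inv.
Qed.

Lemma card_support_le_rank_diag (F : fieldType) n (d : 'rV[F]_n) :
  (#|[set i | (d 0 i != 0)%R]| <= \rank (diag_mx d))%N.
Proof.
set S := [set i | d 0 i != 0]; pose f := @enum_val _ (mem S).
pose E : 'M[F]_(#|S|, n) := \matrix_(k, j) (j == f k)%:R.
pose E' : 'M[F]_(n, #|S|) := \matrix_(j, k) ((j == f k)%:R * (d 0 j)^-1).
apply: (@mulmx1_min_rank _ _ _ _ _ E E').
apply/matrixP => k l; rewrite mul_mx_diag !mxE (bigD1 (f k)) //= big1 ?addr0.
  rewrite !mxE !eqxx mul1r (inj_eq enum_val_inj) mulrA mulrAC mulfV ?mul1r //.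
  by move: (enum_valP k); rewrite inE.
by move=> j /negbTE jk; rewrite !mxE jk !mul0r.
Qed.

Lemma sum_le_perm_image (R : numDomainType) (T : finType) (t : T -> R)
    (s : {perm T}) (A B : {set T}) :
  (forall x, 0 <= t x) -> (forall x, x \in A -> s x \in B) ->
  \sum_(a in A) t a <= \sum_(x in B) t ((s^-1)%g x).
Proof.
move=> t_ge0 sAB.
rewrite [X in _ <= X](reindex_inj (@perm_inj _ s)) /=.
under [in X in _ <= X]eq_bigr do rewrite permK.
rewrite [X in _ <= X]big_mkcond [X in X <= _]big_mkcond /=.
apply: ler_sum => x _; case: ifP => [/sAB -> //|_].
by case: ifP.
Qed.

Section ComplexMatrices.
Variable R : realType.
Local Notation C := (R[i]).
Local Open Scope sesquilinear_scope.
Local Open Scope complex_scope.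

Lemma adjmx_mul m n p (A : 'M[C]_(m, n)) (B : 'M_(n, p)) :
  (A *m B)^t* = B^t* *m A^t*.
Proof. by rewrite trmx_mul map_mxM. Qed.

Lemma adjmx_tens m n p q (A : 'M[C]_(m, n)) (B : 'M[C]_(p, q)) :
  (A *t B)^t* = A^t* *t B^t*.
Proof. by rewrite trmx_tens map_mxT. Qed.

Lemma perm_mx_unitary n (s : 'S_n) : (perm_mx s : 'M[C]_n) \is unitarymx.
Proof.
apply/unitarymxP.
by rewrite tr_perm_mx map_perm_mx -perm_mxM mulgV perm_mx1.
Qed.

Lemma tensmx_unitary m n (A : 'M[C]_m) (B : 'M[C]_n) :
  A \is unitarymx -> B \is unitarymx -> A *t B \is unitarymx.
Proof.
move=> /unitarymxP AA /unitarymxP BB.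
by apply/unitarymxP; rewrite adjmx_tens tensmx_mul AA BB tensmx11.
Qed.

Lemma perm_eq_spectral_diag_diag n (d : 'rV[C]_n) :
  perm_eq [seq d 0 i | i <- enum 'I_n]
          [seq spectral_diag (diag_mx d) 0 i | i <- enum 'I_n].
Proof.
have d_normal : diag_mx d \is normalmx.
  by apply/normalmxP; rewrite tr_diag_mx map_diag_mx; exact: diag_mxC.
have /orthomx_spectralP dE := d_normal.
(* Both sequences list the roots of the characteristic polynomial of diag_mx d. *)
have := @char_poly_invmx_conj _ _ _ (diag_mx (spectral_diag (diag_mx d)))
  (spectral_unit (diag_mx d)).
rewrite -dE !char_poly_trig ?diag_mx_is_trig // => eq_cp.
have diag_entry (v : 'rV[C]_n) i : diag_mx v i i = v 0 i.
  by rewrite mxE eqxx mulr1n.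
apply: prod_XsubC_eq; rewrite !big_map -enumT !big_enum /=.
under eq_bigr do rewrite -(diag_entry d).
by rewrite eq_cp; apply: eq_bigr => i _; rewrite diag_entry.
Qed.

Lemma trnorm_diag_real n (w : 'I_n -> R) :
  trnorm (diag_mx (\row_i (w i)%:C)) = \sum_i `|w i|.
Proof.
pose y := \row_i (((w i)%:C)^* * (w i)%:C) : 'rV[C]_n.
rewrite /trnorm.
have -> : (diag_mx (\row_i (w i)%:C))^t* *m diag_mx (\row_i (w i)%:C) = diag_mx y.
  rewrite tr_diag_mx map_diag_mx mulmx_diag; congr diag_mx.
  by apply/rowP => i; rewrite !mxE.
rewrite -big_enum -(big_map (fun i => spectral_diag (diag_mx y) 0 i) xpredT
  (fun z => Num.sqrt (complex.Re z))).
rewrite -(perm_big _ (perm_eq_spectral_diag_diag y)) big_map big_enum /=.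
by apply: eq_bigr => i _; rewrite mxE /= oppr0 mulr0 subr0 -expr2 sqrtr_sqr.
Qed.

Lemma trnorm_diag_sub_delta0 n (w : 'I_n.+1 -> R) :
  (forall i, 0 <= w i) -> \sum_i w i = 1 ->
  trnorm (diag_mx (\row_i (w i)%:C) - delta_mx 0 0) = 2 * (1 - w 0).
Proof.
move=> w_ge0 w_sum1.
have -> : diag_mx (\row_i (w i)%:C) - delta_mx 0 0 =
    diag_mx (\row_i (w i - (i == 0)%:R)%:C).
  apply/matrixP => i j; rewrite !mxE; case: (i =P j) => [<-|/eqP ij].
    by rewrite andbb !mulr1n raddfB /= rmorph_nat.
  rewrite !mulr0n (_ : (i == 0) && (j == 0) = false) ?subr0 //.
  by apply/negbTE; apply: contra ij => /andP[/eqP-> /eqP->].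
have rest : \sum_(i | i != 0) w i = 1 - w 0.
  by rewrite -w_sum1 [in RHS](bigD1 0) //= addrC addrK.
rewrite trnorm_diag_real (bigD1 0) //=.
rewrite (eq_bigr w) => [|i /negbTE ->]; last by rewrite subr0 ger0_norm.
have w0_le1 : 0 <= 1 - w 0 by rewrite -rest sumr_ge0.
rewrite rest ler0_norm; lra.
Qed.

Lemma ptrace2_perm_diag p g (s : 'S_(p * g)) (t : 'I_(p * g) -> R) :
  ptrace2 (perm_mx s *m diag_mx (\row_x (t x)%:C) *m perm_mx s^-1) =
  diag_mx (\row_i (\sum_k t (s (mxtens_index (i, k))))%:C).
Proof.
rewrite -row_permE -col_permE; apply/matrixP => i j; rewrite !mxE.
under eq_bigr do rewrite !mxE (inj_eq perm_inj) mxtens_index_eq eqxx andbT.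
case: (i == j); last by rewrite big1.
by rewrite mulr1n raddf_sum; apply: eq_bigr => k _; rewrite mulr1n.
Qed.

Lemma concentration_code n c (rho P : 'M[C]_n.+1) (lam : 'I_n.+1 -> R)
    (K : {set 'I_n.+1}) :
  P \is unitarymx -> P *m rho *m P^t* = diag_mx (\row_i (lam i)%:C) ->
  (forall i, 0 <= lam i) -> \sum_i lam i = 1 -> (#|K| <= c.+1)%N ->
  exists2 U : 'M[C]_(n.+1 * c.+1), U \is unitarymx &
    trnorm (ptrace2 (U *m (rho *t delta_mx (ord0 : 'I_c.+1) ord0) *m U^t*)
            - delta_mx ord0 ord0) <= 2 * \sum_(i | i \notin K) lam i.
Proof.
move=> Pu Pdiag lam_ge0 lam_sum1 Kc.
pose A : {set 'I_(n.+1 * c.+1)} := [set mxtens_index (i, ord0) | i in K].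
pose B : {set 'I_(n.+1 * c.+1)} := [set mxtens_index (ord0, k) | k : 'I_c.+1].
have idx_injl (k : 'I_c.+1) : injective (fun i : 'I_n.+1 => mxtens_index (i, k)).
  by move=> i j /eqP; rewrite mxtens_index_eq eqxx andbT => /eqP.
have idx_injr (i : 'I_n.+1) : injective (fun k : 'I_c.+1 => mxtens_index (i, k)).
  by move=> k l /eqP; rewrite mxtens_index_eq eqxx => /eqP.
have [s sAB] : exists s : 'S_(n.+1 * c.+1), forall x, x \in A -> s x \in B.
  by apply: perm_map_subset; rewrite !card_imset ?card_ord.
pose t (x : 'I_(n.+1 * c.+1)) :=
  let: (i, k) := mxtens_unindex x in if k == ord0 then lam i else 0.
have t_idx i k : t (mxtens_index (i, k)) = if k == ord0 then lam i else 0.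
  by rewrite /t mxtens_indexK.
have t_ge0 x : 0 <= t x by rewrite /t; case: mxtens_unindex => i k; case: ifP.
have t_sum i : \sum_k t (mxtens_index (i, k)) = lam i.
  rewrite (bigD1 ord0) //= big1 ?addr0 ?t_idx //.
  by move=> k /negbTE k0; rewrite t_idx k0.
have one_unitary : (1%:M : 'M[C]_c.+1) \is unitarymx.
  by apply/unitarymxP; rewrite trmx1 map_mx1 mulmx1.
exists (perm_mx s^-1 *m (P *t 1%:M)).
  by rewrite mul_unitarymx ?perm_mx_unitary ?tensmx_unitary.
have -> : perm_mx s^-1 *m (P *t 1%:M) *m (rho *t delta_mx ord0 ord0) *m
      (perm_mx s^-1 *m (P *t 1%:M))^t* =
    perm_mx s^-1 *m diag_mx (\row_x (t x)%:C) *m perm_mx s^-1^-1.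
  rewrite adjmx_mul adjmx_tens tr_perm_mx map_perm_mx !mulmxA; congr (_ *m _).
  rewrite -!mulmxA !tensmx_mul mulmxA Pdiag trmx1 map_mx1 mul1mx mulmx1.
  rewrite tensmx_diag_delta0; congr (_ *m _); congr diag_mx; apply/rowP => x.
  by rewrite !mxE /t; case: mxtens_unindex => i k; rewrite mxE; case: ifP.
rewrite ptrace2_perm_diag trnorm_diag_sub_delta0; last 2 first.
- by move=> i; apply: sumr_ge0 => k _.
- rewrite -(sum_mxtens_index (fun x => t (s^-1 x)%g)).
  rewrite (reindex_inj (@perm_inj _ s)) /=.
  under eq_bigr do rewrite permK.
  by rewrite sum_mxtens_index -lam_sum1; apply: eq_bigr => i _.
have mass_K : \sum_(i in K) lam i <= \sum_k t ((s^-1)%g (mxtens_index (ord0, k))).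
  have := sum_le_perm_image t_ge0 sAB.
  rewrite !big_imset /=; last 2 first.
  - by move=> k l _ _; apply: idx_injr.
  - by move=> i j _ _; apply: idx_injl.
  by under eq_bigr do rewrite t_idx eqxx.
have split_K : \sum_(i in K) lam i + \sum_(i | i \notin K) lam i = 1.
  by rewrite -lam_sum1 [in RHS](bigID (mem K)).
lra.
Qed.
End ComplexMatrices.

Section RealBounds.
Variable R : realType.

Lemma log2_ge0 (k : nat) : 0 <= log2 (k%:R : R).
Proof.
have ln2_gt0 : 0 < ln (2 : R) by rewrite ln_gt0 ?ltr1n.
rewrite /log2 divr_ge0 ?(ltW ln2_gt0) //.
case: k => [|k]; first by rewrite ln0.
by apply: ln_ge0; rewrite ler1n.
Qed.

Lemma log2_le (a b : nat) : (0 < a)%N -> (a <= b)%N -> log2 (a%:R : R) <= log2 b%:R.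
Proof.
move=> a_gt0 ab; rewrite /log2 ler_wpM2r ?invr_ge0 ?ln_ge0 ?ler1n //.
by rewrite ler_ln ?ler_nat // posrE ltr0n //; exact: leq_trans ab.
Qed.

Lemma log2M (a b : nat) : (0 < a)%N -> (0 < b)%N ->
  log2 ((a * b)%:R : R) = log2 a%:R + log2 b%:R.
Proof. by move=> a_gt0 b_gt0; rewrite /log2 natrM lnM ?posrE ?ltr0n // mulrDl. Qed.

Lemma mul2_le_mul3_sqrt (x : R) : 0 <= x <= 1 -> 2 * x <= 3 * Num.sqrt x.
Proof.
case/andP => x_ge0 x_le1.
have sx_ge0 : 0 <= Num.sqrt x by rewrite sqrtr_ge0.
have sx_le1 : Num.sqrt x <= 1 by rewrite -sqrtr1 ler_sqrt.
have : x = Num.sqrt x ^+ 2 by rewrite sqr_sqrtr.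
rewrite expr2; nra.
Qed.
End RealBounds.

Section States.
Variable R : realType.
Local Notation C := (R[i]).
Local Open Scope sesquilinear_scope.
Local Open Scope complex_scope.

Section State.
Variables (n : nat) (rho : 'M[C]_n).
Hypothesis rho_state : is_state rho.
Local Notation P := (spectralmx rho).

Lemma state_spectral_diag_conj : P *m rho *m P^t* = diag_mx (spectral_diag rho).
Proof.
have [rho_herm _ _] := rho_state.
have /orthomx_spectralP rhoE : rho \is normalmx by apply/normalmxP; rewrite rho_herm.
have /unitarymxP PPt := spectral_unitarymx rho.
transitivity (P *m (invmx P *m diag_mx (spectral_diag rho) *m P) *m P^t*).
  by rewrite -rhoE.
by rewrite !mulmxA mulmxV ?spectral_unit // mul1mx -mulmxA PPt mulmx1.
Qed.

Lemma spectral_diag_state_ge0 i : 0 <= spectral_diag rho 0 i.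
Proof.
have [_ rho_psd _] := rho_state.
have := rho_psd (row i P).
set e := delta_mx 0 i : 'rV[C]_n.
have -> : row i P *m rho *m (row i P)^t* = e *m (P *m rho *m P^t*) *m e^t*.
  by rewrite rowE adjmx_mul !mulmxA.
rewrite state_spectral_diag_conj -rowE mxE (bigD1 i) //= big1 ?addr0.
  by rewrite !mxE !eqxx /= conjC1 mulr1 mulr1n.
by move=> j /negbTE ji; rewrite !mxE ji /= conjC0 mulr0.
Qed.

Lemma spectral_diag_stateE i : spectral_diag rho 0 i = (eigs rho i)%:C.
Proof.
move: (spectral_diag_state_ge0 i); rewrite /eigs.
by case: (spectral_diag rho 0 i) => a b; rewrite lecE /= => /andP[/eqP-> _].
Qed.

Lemma eigs_state_ge0 i : 0 <= eigs rho i.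
Proof. by move: (spectral_diag_state_ge0 i); rewrite spectral_diag_stateE lecR. Qed.

Lemma state_eigs_conj : P *m rho *m P^t* = diag_mx (\row_i (eigs rho i)%:C).
Proof.
rewrite state_spectral_diag_conj; congr diag_mx.
by apply/rowP => i; rewrite mxE spectral_diag_stateE.
Qed.

Lemma sum_eigs_state : \sum_i eigs rho i = 1.
Proof.
have [_ _ tr1] := rho_state.
have PtP : P^t* *m P = 1%:M.
  by rewrite -invmx_unitary ?spectral_unitarymx // mulVmx ?spectral_unit.
have := congr1 (@complex.Re R) (congr1 mxtrace state_eigs_conj).
rewrite mxtrace_mulC mulmxA PtP mul1mx tr1 mxtrace_diag raddf_sum /=.
by under eq_bigr do rewrite mxE.
Qed.
End State.

Section Smoothing.
Variables (n : nat) (rho : 'M[C]_n) (eps : R).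
Local Notation Z := (take (n_zeroed rho eps) (eig_order rho)).

Definition smoothed_spectrum : 'rV[C]_n :=
  \row_i (if i \in Z then 0 else spectral_diag rho 0 i).

Definition smoothed_support : {set 'I_n} := [set i | smoothed_spectrum 0 i != 0].

Lemma smoothed_opE :
  smoothed_op rho eps =
  invmx (spectralmx rho) *m diag_mx smoothed_spectrum *m spectralmx rho.
Proof. by []. Qed.

Lemma card_smoothed_support_le_rank :
  (#|smoothed_support| <= \rank (smoothed_op rho eps))%N.
Proof.
rewrite smoothed_opE mxrank_invmx_conj ?spectral_unit //.
exact: card_support_le_rank_diag.
Qed.

Lemma sum_zeroed_eigs_le : 0 <= eps -> \sum_(i <- Z) eigs rho i <= eps.
Proof.
move=> eps_ge0; rewrite /n_zeroed.
have [k /= k_ok ->] := @eq_bigmax_cond _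
  (fun k : 'I_n.+1 => \sum_(i <- take k (eig_order rho)) eigs rho i <= eps) val
  (ltac:(by apply/card_gt0P; exists ord0; rewrite unfold_in /= take0 big_nil)).
exact: k_ok.
Qed.

Lemma sum_eigs_notin_smoothed_support :
  0 <= eps -> \sum_(i | i \notin smoothed_support) eigs rho i <= eps.
Proof.
move=> eps_ge0.
have uniq_Z : uniq Z by rewrite take_uniq // sort_uniq enum_uniq.
apply: le_trans (sum_zeroed_eigs_le eps_ge0); rewrite big_uniq //=.
rewrite [X in _ <= X]big_mkcond [X in X <= _]big_mkcond /=.
apply: ler_sum => i _; rewrite inE mxE negbK.
case: (i \in Z); first by rewrite eqxx.
by case: eqP => [s0|_]; rewrite // /eigs s0.
Qed.
End Smoothing.

Lemma achievable_le_log2_dim n (rho : 'M[C]_n.+1) e r :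
  achievable rho e r -> r <= log2 n.+1%:R.
Proof.
case=> c [p [g [U [dimE _ _ ->]]]].
have g_gt0 : (0 < g)%N by move: dimE; case: (g) => //; rewrite muln0.
rewrite lerBlDr -log2M // log2_le // -dimE leq_pmulr //.
Qed.

Lemma achievable_weaken n (rho : 'M[C]_n) e e' r :
  e <= e' -> achievable rho e r -> achievable rho e' r.
Proof.
move=> le_ee' [c [p [g [U [dimE Uu err rE]]]]].
by exists c, p, g, U; split=> //; apply: le_trans le_ee'.
Qed.

Lemma achievable_smoothed n (rho : 'M[C]_n.+1) eps :
  is_state rho -> 0 <= eps ->
  achievable rho (2 * eps)
    (log2 n.+1%:R - log2 (#|smoothed_support rho eps|.-1.+1)%:R).
Proof.
move=> rho_state eps_ge0; set K := smoothed_support rho eps.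
have [U Uu err] := concentration_code (spectral_unitarymx rho)
  (state_eigs_conj rho_state) (eigs_state_ge0 rho_state) (sum_eigs_state rho_state)
  (leqSpred #|K|).
exists #|K|.-1, n, #|K|.-1.+1, U; split => //.
apply: le_trans err _; rewrite ler_wpM2l //.
exact: sum_eigs_notin_smoothed_support.
Qed.
End States.

Theorem theorem1 (R : realType) (dA : nat) (rho : 'M[R[i]]_dA) (eps : R) :
  is_state rho -> 0 <= eps <= 1 ->
  log2 dA%:R - Hmax_tilde rho eps <= purity rho (3 * Num.sqrt eps).
Proof.
case: dA rho => [|n] rho rho_state eps01.
  by case: rho_state => _ _ /eqP; rewrite /mxtrace big_ord0 eq_sym oner_eq0.
have [eps_ge0 _] := andP eps01; set K := smoothed_support rho eps.
have ach := achievable_weaken (mul2_le_mul3_sqrt eps01)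
  (achievable_smoothed rho_state eps_ge0).
apply: le_trans (ub_le_sup _ ach); last first.
  by exists (log2 n.+1%:R) => r; apply: achievable_le_log2_dim.
rewrite lerB // /Hmax_tilde.
have := card_smoothed_support_le_rank rho eps; rewrite -/K.
case: #|K| => [|k] K_le_rank; first by rewrite /log2 ln1 mul0r log2_ge0.
exact: log2_le.
Qed.
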